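(* Let $G$ be an abelian group, $w\in G$, and $\alpha:G\to G$ a group automorphism with $\alpha^2=\mathrm{id}$. Define $\beta:G\to G$ by $\beta(u)=\alpha(u)+w$. Let $q_0$ be the cardinality of the subgroup of $G$ generated by $(\alpha+\mathrm{id})(w)$. If $q_0$ is infinite, then every orbit $\{\beta^k(u):k\in\mathbb{Z}\}$ of $\beta$ is infinite. If $q_0$ is finite, then the only possible cardinalities of orbits of $\beta$ are $q_0$ (possible only if $q_0$ is odd) and $2q_0$; orbits of odd cardinality exist if and only if $$( * )\qquad q_0 \text{ is odd and } q_0w\in(\alpha-\mathrm{id})(G)$$ (this holds e.g. if $q_0$ is odd and $(\alpha-\mathrm{id})(G)=\ker(\alpha+\mathrm{id})$). Moreover the numbers of orbits of odd, resp. even, cardinality are $$\nu_{\mathrm{odd}}(\beta)=\begin{cases}\#\ker(\alpha-\mathrm{id})/q_0 & \text{if } ( * ) \text{ holds},\\ 0&\text{otherwise},\end{cases}\qquad \nu_{\mathrm{even}}(\beta)=\begin{cases}\#\bigl(G\setminus\ker(\alpha-\mathrm{id})\bigr)/2q_0 & \text{if } ( * ) \text{ holds},\\ \#G/2q_0&\text{otherwise}.\end{cases}$$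
   Context: $\#$ denotes cardinality; the quotient of an infinite cardinality by a positive integer is understood to be infinite. *)

From HB Require Import structures.
From mathcomp Require Import all_boot all_order all_algebra.
From mathcomp Require Import boolp classical_sets cardinality.
Set Implicit Arguments. Unset Strict Implicit. Unset Printing Implicit Defensive.
Import Order.TTheory GRing.Theory Num.Theory.
Local Open Scope classical_set_scope.
Local Open Scope ring_scope.
Local Open Scope card_scope.

(* Cardinalities in N u {infinite}: the paper only distinguishes finite
   cardinalities from "infinite". *)
Inductive ecard := Fin of nat | Inf.

Definition card_is {T} (A : set T) (c : ecard) : Prop :=
  match c with
  | Fin n => A #= `I_n
  | Inf => infinite_set A
  end.

Definition ediv (c : ecard) (n : nat) : ecard :=
  match c with
  | Fin m => Fin (m %/ n)%N
  | Inf => Inf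
  end.

Definition cyclic_subgroup (G : zmodType) (x : G) : set G :=
  [set y | exists k : int, y = x *~ k].

Definition beta (G : zmodType) (alpha : G -> G) (w : G) (u : G) : G := alpha u + w.

(* the orbit {beta^k(u) : k in Z} of u under the bijection f:
   v = f^k u with k >= 0, or v = f^(-k) u, i.e. f^k v = u. *)
Definition orbit_of (G : Type) (f : G -> G) (u : G) : set G :=
  [set v | exists k : nat, v = iter k f u \/ iter k f v = u].

Definition orbits (G : Type) (f : G -> G) : set (set G) :=
  [set O | exists u, O = orbit_of f u].

Definition odd_orbits (G : Type) (f : G -> G) : set (set G) :=
  [set O | orbits f O /\ exists n, odd n /\ card_is O (Fin n)].

Definition even_orbits (G : Type) (f : G -> G) : set (set G) :=
  [set O | orbits f O /\ exists n, ~~ odd n /\ card_is O (Fin n)].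

From HB Require Import structures.
From mathcomp Require Import all_boot all_order all_algebra.
From mathcomp Require Import boolp classical_sets cardinality finmap zify.
Set Implicit Arguments. Unset Strict Implicit. Unset Printing Implicit Defensive.
Import GRing.Theory.
Local Open Scope classical_set_scope.
Local Open Scope card_scope.

(* Put t := alpha w + w.  Since alpha is an involution, beta o beta is translation
   by t and alpha fixes t, so the orbit of u is the union of the two cosets u + <t>
   and beta u + <t>.  They coincide exactly when beta u - u = (alpha - 1) u + w lies
   in <t>, giving orbits of size q0 = #<t> or 2 q0.  Such an element y satisfies
   y + y = alpha y + y = t, which forces q0 odd, and q0 w = -(alpha - 1)(q0 u);
   conversely from q0 = 2r + 1 and q0 w = (alpha - 1) g the point u0 = -(g + r w)
   has a short orbit.  Since an element of odd-order <t> negated by alpha is 0, the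
   short-orbit points are then exactly u0 + ker (alpha - 1), and the counts follow
   by dividing by the orbit sizes. *)

Lemma card_eq_II_uniq T (A : set T) n m : A #= `I_n -> A #= `I_m -> n = m.
Proof. by rewrite card_eq_sym => An Am; apply/card_eq_II; exact: card_eq_trans An Am. Qed.

Lemma card_is_card_eq T U (A : set T) (B : set U) c :
  A #= B -> card_is B c -> card_is A c.
Proof.
case: c => [n|] /= AB; first exact: card_eq_trans.
by rewrite (eq_finite_set AB).
Qed.

Lemma card_eq_II_fset_set (T : choiceType) (A : set T) n :
  A #= `I_n <-> (finite_set A /\ #|` fset_set A| = n).
Proof.
split=> [An|[finA <-]]; first by split; [exists n | exact: card_fset_set].
by rewrite -[X in X #= _](fset_setK finA); apply/card_eq_fsetP.
Qed.

Lemma card_setU_disjoint (T : choiceType) (A B : set T) n m :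
  A #= `I_n -> B #= `I_m -> A `&` B = set0 -> A `|` B #= `I_(n + m).
Proof.
move=> /card_eq_II_fset_set[finA <-] /card_eq_II_fset_set[finB <-] AB0.
apply/card_eq_II_fset_set.
split; first by rewrite finite_setU.
by rewrite fset_setU // cardfsU -fset_setI // AB0 fset_set0 cardfs0 subn0.
Qed.

Lemma card_is_image_fibres (T U : choiceType) (f : T -> U) (A : set T) m :
  (0 < m)%N -> (forall x, A x -> [set z | A z /\ f z = f x] #= `I_m) ->
  forall c, card_is A c -> card_is (f @` A) (ediv c m).
Proof.
move=> m_gt0 fibre [n|] /=; last first.
  move=> infA finfA; apply: infA.
  apply: (@sub_finite_set _ _ (\bigcup_(y in f @` A) [set z | A z /\ f z = y])).
    by move=> x Ax; exists (f x) => //; exists x.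
  by apply: bigcup_finite => // _ [x Ax <-]; exists m; exact: fibre.
move=> /card_eq_II_fset_set[finA <-]; apply/card_eq_II_fset_set.
split; first exact: finite_image.
suff <- : (#|` fset_set (f @` A)| * m)%N = #|` fset_set A| by rewrite mulnK.
rewrite fset_set_image // !card_fset_sum1 (partition_big_imfset _ f) big_distrl.
rewrite [LHS]big_seq [RHS]big_seq; apply: eq_bigr => _ /imfsetP[x /= xA ->].
have Ax : A x by move: xA; rewrite in_fset_set // => /set_mem.
have /card_eq_II_fset_set[finF <-] := fibre x Ax.
rewrite mul1n big_fset_condE -card_fset_sum1; congr #|` _|; apply/fsetP => z.
rewrite in_fset /= inE /= !in_fset_set //.
apply/idP/andP => [/set_mem[Az /eqP fz]|[/set_mem Az /eqP fz]]; last exact/mem_set.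
by split=> //; exact/mem_set.
Qed.

Local Open Scope ring_scope.

Lemma card_translate (G : zmodType) (A : set G) u : [set v | A (v - u)] #= A.
Proof.
have -> : [set v | A (v - u)] = (+%R^~ u) @` A.
  apply/seteqP; split=> v; first by exists (v - u); rewrite ?subrK.
  by case=> y Ay <-; rewrite /= addrK.
by apply: inj_card_eq => y z _ _ /addIr.
Qed.

Section CyclicSubgroup.
Variables (G : zmodType) (x : G).
Local Notation X := (cyclic_subgroup x).

Lemma cyclic_subgroup0 : X 0.
Proof. by exists 0; rewrite mulr0z. Qed.

Lemma cyclic_subgroup_mulrn n : X (x *+ n).
Proof. by exists n; rewrite pmulrn. Qed.

Lemma cyclic_subgroupD y z : X y -> X z -> X (y + z).
Proof. by move=> [k ->] [l ->]; exists (k + l); rewrite mulrzDr. Qed.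

Lemma cyclic_subgroupN y : X y -> X (- y).
Proof. by move=> [k ->]; exists (- k); rewrite mulrNz. Qed.

Lemma cyclic_subgroup_subC y z : X (y - z) -> X (z - y).
Proof. by rewrite -opprB => /cyclic_subgroupN; rewrite opprK. Qed.

Lemma mulrz_modz n k : (0 < n)%N -> x *+ n = 0 -> x *~ k = x *+ `|(k %% n)%Z|%N.
Proof.
move=> n_gt0 xn0; rewrite pmulrn gez0_abs ?modz_ge0 -?lt0n //.
by rewrite {1}(divz_eq k n) mulrzDr mulrC mulrzA -pmulrn xn0 mul0rz add0r.
Qed.

Lemma card_cyclic_subgroup_le q n : X #= `I_q -> (0 < n)%N -> x *+ n = 0 ->
  (q <= n)%N.
Proof.
move=> Xq n_gt0 xn0; rewrite -card_le_II.
apply: (@card_le_trans _ _ _ X); first by move: Xq; rewrite card_eq_sym => /card_eqPle[].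
apply: (@card_le_trans _ _ _ ((fun i => x *+ i) @` `I_n)); last exact: card_image_le.
apply: subset_card_le => _ [k ->]; rewrite (mulrz_modz k n_gt0 xn0).
exists `|(k %% n)%Z|%N => //=.
by rewrite -ltz_nat gez0_abs ?modz_ge0 -?lt0n // ltz_pmod.
Qed.

(* Pigeonhole on the q + 1 multiples x *+ 0, ..., x *+ q of x. *)
Lemma cyclic_subgroup_torsion q : X #= `I_q ->
  exists2 p, (0 < p <= q)%N & x *+ p = 0.
Proof.
move=> Xq; apply: contrapT => no_p.
have inj : {in `I_q.+1 &, injective (fun i => x *+ i)}.
  suff lt_inj i j : (i < j <= q)%N -> x *+ i = x *+ j -> i = j.
    move=> i j /set_mem /= iq /set_mem /= jq eqx.
    case: (ltngtP i j) => [ij|ji|//].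
      by apply: lt_inj eqx; rewrite ij -ltnS.
    by apply/esym; apply: lt_inj (esym eqx); rewrite ji -ltnS.
  move=> /andP[ij jq] eqx; exfalso; apply: no_p; exists (j - i)%N.
    by rewrite subn_gt0 ij (leq_trans (leq_subr _ _)).
  by apply: (addrI (x *+ i)); rewrite -mulrnDr subnKC ?(ltnW ij) // eqx addr0.
suff : `I_q.+1 #<= `I_q by rewrite card_le_II ltnn.
apply: (@card_le_trans _ _ _ ((fun i => x *+ i) @` `I_q.+1)).
  by move: (inj_card_eq inj); rewrite card_eq_sym => /card_eqPle[].
apply: (@card_le_trans _ _ _ X); last by case/card_eqPle: Xq.
by apply: subset_card_le => _ [i _ <-]; exact: cyclic_subgroup_mulrn.
Qed.

Lemma cyclic_subgroup_order q : X #= `I_q -> (0 < q)%N /\ x *+ q = 0.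
Proof.
move=> Xq; have [p /andP[p_gt0 pq] xp0] := cyclic_subgroup_torsion Xq.
suff -> : q = p by [].
by apply/eqP; rewrite eqn_leq card_cyclic_subgroup_le.
Qed.

Lemma cyclic_subgroup_mulrn_card q y : X #= `I_q -> X y -> y *+ q = 0.
Proof.
move=> /cyclic_subgroup_order[_ xq0] [k ->].
by rewrite pmulrn -mulrzA mulrC mulrzA -pmulrn xq0 mul0rz.
Qed.

Lemma cyclic_subgroup_odd_2torsion q y : X #= `I_q -> odd q -> X y ->
  y + y = 0 -> y = 0.
Proof.
move=> Xq q_odd Xy yy0.
have yr0 : y *+ q./2 + y *+ q./2 = 0 by rewrite -mulrnDl yy0 mul0rn.
have := cyclic_subgroup_mulrn_card Xq Xy.
by rewrite -[q]odd_double_half q_odd -addnn mulrnDr mulrnDr yr0 addr0.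
Qed.

Definition cyclic_coset u := [set v | X (v - u)].

Lemma cyclic_coset_id u : cyclic_coset u u.
Proof. by rewrite /cyclic_coset /= subrr; exact: cyclic_subgroup0. Qed.

Lemma cyclic_cosetC u v : cyclic_coset u v -> cyclic_coset v u.
Proof. exact: cyclic_subgroup_subC. Qed.

Lemma cyclic_coset_eq u v : X (u - v) -> cyclic_coset u = cyclic_coset v.
Proof.
move=> Xuv; apply/seteqP; split=> y; rewrite /cyclic_coset /= => Xy.
  by rewrite -(subrKA u y (- v)); exact: cyclic_subgroupD.
rewrite -(subrKA v y (- u)); apply: cyclic_subgroupD => //.
exact: cyclic_subgroup_subC.
Qed.

Lemma cyclic_cosets_disjoint u v : ~ X (u - v) ->
  cyclic_coset u `&` cyclic_coset v = set0.
Proof.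
move=> nXuv; apply/seteqP; split=> // y [Xyu Xyv]; apply: nXuv.
rewrite -(subrKA y u (- v)); apply: cyclic_subgroupD => //.
exact: cyclic_subgroup_subC.
Qed.

End CyclicSubgroup.

Lemma orbit_ofC (T : Type) (f : T -> T) u v : orbit_of f u v -> orbit_of f v u.
Proof. by move=> [k [->|<-]]; exists k; [right | left]. Qed.

Lemma orbit_of_iter (T : Type) (f : T -> T) u k : orbit_of f u (iter k f u).
Proof. by exists k; left. Qed.

Lemma orbit_of_stepl (T : Type) (f : T -> T) u v : injective f ->
  orbit_of f (f u) v -> orbit_of f u v.
Proof.
move=> f_inj [k [->|]]; first by exists k.+1; left; rewrite iterSr.
case: k => [/= ->|k]; first by exists 1%N; left.
by rewrite iterS => /f_inj; exists k; right.
Qed.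

Section AffineInvolution.
Variables (G : zmodType) (w : G) (alpha : G -> G).
Hypothesis alphaD : forall x y, alpha (x + y) = alpha x + alpha y.
Hypothesis alphaK : involutive alpha.

Lemma alphaB : {morph alpha : x y / x - y}.
Proof.
have alpha0 : alpha 0 = 0 by apply: (addrI (alpha 0)); rewrite -alphaD !addr0.
move=> x y; rewrite alphaD; congr (_ + _).
by apply: (addrI (alpha y)); rewrite -alphaD !subrr.
Qed.

HB.instance Definition _ := GRing.isZmodMorphism.Build G G alpha alphaB.

Local Notation b := (beta alpha w).
Local Notation t := (alpha w + w).
Local Notation Q := (cyclic_subgroup t).
Local Notation C := (cyclic_coset t).

Lemma alpha_t : alpha t = t.
Proof. by rewrite alphaD alphaK addrC. Qed.

Lemma alpha_cyclic_subgroup y : Q y -> alpha y = y.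
Proof. by move=> [k ->]; rewrite raddfMz /= alpha_t. Qed.

Lemma betaB u v : b u - b v = alpha (u - v).
Proof. by rewrite /beta raddfB opprD addrACA subrr addr0. Qed.

Lemma beta_beta u : b (b u) = u + t.
Proof. by rewrite /beta alphaD alphaK addrA. Qed.

Lemma beta_inj : injective b.
Proof. by move=> u v /(congr1 b); rewrite !beta_beta => /addIr. Qed.

Lemma iter_beta_double n u : iter n.*2 b u = u + t *+ n.
Proof.
elim: n => [|n IH]; first by rewrite addr0.
by rewrite doubleS /= IH beta_beta mulrSr [RHS]addrA.
Qed.

Lemma beta_sub_alpha_sub u v : b u - v = alpha (u - b v) + t.
Proof. by rewrite raddfB /= /beta alphaD alphaK opprD !addrA subrK addrAC. Qed.

Lemma beta_coset u v : C u v -> C (b u) (b v).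
Proof. by rewrite /cyclic_coset /= betaB => /[dup] /alpha_cyclic_subgroup ->. Qed.

Lemma beta_coset_beta u v : C (b u) v -> C u (b v).
Proof.
rewrite /cyclic_coset /= beta_sub_alpha_sub => /[dup] /alpha_cyclic_subgroup ->.
by move=> Qvbu; apply: cyclic_subgroupD => //; exact: (cyclic_subgroup_mulrn _ 1).
Qed.

Lemma orbit_of_coset u v : C u v -> orbit_of b u v.
Proof.
case=> -[] n /eqP; rewrite subr_eq => /eqP ->.
  by rewrite -pmulrn addrC -iter_beta_double; exact: orbit_of_iter.
apply: orbit_ofC; exists n.+1.*2; left.
by rewrite iter_beta_double NegzE mulrNz -pmulrn addrC addNKr.
Qed.

Lemma iter_beta_cosets k u : (C u `|` C (b u)) (iter k b u).
Proof.
elim: k => [|k [IH|IH]] /=; first by left; exact: cyclic_coset_id.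
  by right; exact: beta_coset.
by left; exact: beta_coset_beta.
Qed.

Lemma orbit_ofE u : orbit_of b u = C u `|` C (b u).
Proof.
apply/seteqP; split=> v; last first.
  case=> [/orbit_of_coset //|/orbit_of_coset]; exact: orbit_of_stepl beta_inj.
case=> k [->|vu]; first exact: iter_beta_cosets.
have := iter_beta_cosets k v; rewrite vu.
by case=> [/cyclic_cosetC|/beta_coset_beta/cyclic_cosetC]; [left | right].
Qed.

Lemma orbit_cosets_eq u v : orbit_of b u v ->
  (C v = C u /\ C (b v) = C (b u)) \/ (C v = C (b u) /\ C (b v) = C u).
Proof.
rewrite orbit_ofE => -[uv|buv]; [left | right]; split; apply: cyclic_coset_eq => //.
  exact: beta_coset.
exact: beta_coset_beta.
Qed.

Lemma orbit_of_eq u v : orbit_of b u v -> orbit_of b v = orbit_of b u.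
Proof.
by move=> /orbit_cosets_eq[[Cv Cbv]|[Cv Cbv]]; rewrite !orbit_ofE Cv Cbv // setUC.
Qed.

(* [C u (b u)], i.e. b u - u \in Q, says that the orbit of u is the single coset
   [C u]; such orbits are called short below. *)
Lemma short_orbitE u : C u (b u) <-> C (b u) = C u.
Proof. by split=> [/cyclic_coset_eq|<-] //; exact: cyclic_coset_id. Qed.

Lemma short_orbit_orbit u v : orbit_of b u v -> C u (b u) -> C v (b v).
Proof.
by move=> /orbit_cosets_eq[[Cv Cbv]|[Cv Cbv]]; rewrite !short_orbitE Cv Cbv // => ->.
Qed.

Lemma card_orbit_infinite u : infinite_set Q -> infinite_set (orbit_of b u).
Proof.
rewrite orbit_ofE => infQ /(sub_finite_set (@subsetUl _ (C u) (C (b u)))).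
by rewrite (eq_finite_set (card_translate Q u)).
Qed.

Definition delta x := alpha x - x.

Lemma deltaD x y : delta (x + y) = delta x + delta y.
Proof. by rewrite /delta alphaD opprD addrACA. Qed.

Lemma deltaN x : delta (- x) = - delta x.
Proof. by rewrite /delta raddfN /= opprB opprK addrC. Qed.

Lemma deltaB x y : delta (x - y) = delta x - delta y.
Proof. by rewrite deltaD deltaN. Qed.

Lemma deltaMn x n : delta (x *+ n) = delta x *+ n.
Proof. by rewrite /delta raddfMn /= mulrnBl. Qed.

Lemma alpha_delta x : alpha (delta x) = - delta x.
Proof. by rewrite /delta raddfB /= alphaK opprB. Qed.

Lemma beta_subr u : b u - u = delta u + w.
Proof. by rewrite /beta /delta addrAC. Qed.

Lemma alpha_beta_subr u : alpha (b u - u) + (b u - u) = t.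
Proof. by rewrite beta_subr alphaD alpha_delta addrACA addNr add0r. Qed.

Lemma beta_subr_shift u v : b v - v = (b u - u) + delta (v - u).
Proof. by rewrite !beta_subr deltaB [RHS]addrAC [delta u + _]addrC subrK. Qed.

Lemma short_orbit_witness q g : odd q -> w *+ q = alpha g - g ->
  C (- (g + w *+ q./2)) (b (- (g + w *+ q./2))).
Proof.
move=> q_odd wq; set r := q./2.
have wrt : w *+ q + delta w *+ r = t *+ r + w.
  rewrite -[q]odd_double_half q_odd add1n mulrSr -addnn mulrnDr /delta mulrnBl mulrnDl.
  by rewrite [LHS]addrC -[w *+ r + _ + w]addrA subrKA addrA.
rewrite /cyclic_coset /= beta_subr deltaN deltaD deltaMn.
have -> : delta g = w *+ q by rewrite wq.
by rewrite wrt opprD subrK; apply: cyclic_subgroupN; exact: cyclic_subgroup_mulrn.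
Qed.

Lemma card_is_orbits (A : set G) m c : (0 < m)%N ->
  (forall u v, A u -> orbit_of b u v -> A v) ->
  (forall u, A u -> orbit_of b u #= `I_m) ->
  card_is A c -> card_is (orbit_of b @` A) (ediv c m).
Proof.
move=> m_gt0 A_closed card_orbit; apply: card_is_image_fibres => // u Au.
suff -> : [set v | A v /\ orbit_of b v = orbit_of b u] = orbit_of b u.
  exact: card_orbit.
apply/seteqP; split=> v /=; first by move=> [_ <-]; exact: (orbit_of_iter _ _ 0).
by move=> uv; split; [exact: A_closed uv | exact: orbit_of_eq].
Qed.

Section FiniteCyclicSubgroup.
Variable q : nat.
Hypothesis card_Q : Q #= `I_q.

Lemma card_short_orbit u : C u (b u) -> orbit_of b u #= `I_q.
Proof.
move=> /short_orbitE Cbu; rewrite orbit_ofE Cbu setUid.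
exact: card_eq_trans (card_translate Q u) card_Q.
Qed.

Lemma card_long_orbit u : ~ C u (b u) -> orbit_of b u #= `I_(2 * q).
Proof.
move=> nCu; rewrite orbit_ofE mul2n -addnn; apply: card_setU_disjoint.
- exact: card_eq_trans (card_translate Q u) card_Q.
- exact: card_eq_trans (card_translate Q (b u)) card_Q.
- by apply: cyclic_cosets_disjoint => /cyclic_subgroup_subC /nCu.
Qed.

(* If b u - u = y lies in Q then y + y = t, so q even would give t *+ q./2 = 0. *)
Lemma short_orbit_odd u : C u (b u) -> odd q.
Proof.
move=> Cbu; apply: contraT => q_even; have [q_gt0 _] := cyclic_subgroup_order card_Q.
have q_double : q = q./2.*2 by rewrite -[LHS]odd_double_half (negbTE q_even).
have yy : (b u - u) + (b u - u) = t.
  by rewrite -{1}(alpha_cyclic_subgroup Cbu) alpha_beta_subr.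
have : (q <= q./2)%N.
  apply: card_cyclic_subgroup_le card_Q _ _; first by rewrite -double_gt0 -q_double.
  by rewrite -yy mulrnDl -mulrnDr addnn -q_double (cyclic_subgroup_mulrn_card card_Q Cbu).
lia.
Qed.

Lemma short_orbit_cond u : C u (b u) -> exists g, w *+ q = alpha g - g.
Proof.
move=> Cbu; exists (- (u *+ q)); have := cyclic_subgroup_mulrn_card card_Q Cbu.
rewrite beta_subr mulrnDl addrC => /eqP; rewrite addr_eq0 => /eqP ->.
by rewrite -[RHS]/(delta _) deltaN deltaMn.
Qed.

(* b v - v = (b u0 - u0) + delta (v - u0), and an element of Q negated by alpha
   vanishes when q is odd. *)
Lemma short_orbit_shift u0 v : odd q -> C u0 (b u0) ->
  C v (b v) <-> alpha (v - u0) - (v - u0) = 0.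
Proof.
move=> q_odd Cbu0; rewrite -[alpha _ - _]/(delta _) /cyclic_coset /=.
rewrite (beta_subr_shift u0 v).
split=> [Qd|->]; last by rewrite addr0.
have Qy : Q (delta (v - u0)).
  rewrite -(addKr (b u0 - u0) (delta (v - u0))).
  exact: cyclic_subgroupD (cyclic_subgroupN Cbu0) Qd.
apply: (cyclic_subgroup_odd_2torsion card_Q q_odd Qy).
by rewrite -{1}(alpha_cyclic_subgroup Qy) alpha_delta addNr.
Qed.

Lemma odd_orbitsE : odd_orbits b = orbit_of b @` [set u | C u (b u)].
Proof.
apply/seteqP; split=> O.
  move=> [[u ->] [n [n_odd On]]]; exists u => //; apply: contrapT => nCu.
  by move: n_odd; rewrite (card_eq_II_uniq On (card_long_orbit nCu)) mul2n odd_double.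
move=> [u Cu <-]; split; first by exists u.
by exists q; split; [exact: short_orbit_odd Cu | exact: card_short_orbit].
Qed.

Lemma even_orbitsE : even_orbits b = orbit_of b @` [set u | ~ C u (b u)].
Proof.
apply/seteqP; split=> O.
  move=> [[u ->] [n [n_even On]]]; exists u => // Cu.
  move: n_even; rewrite (card_eq_II_uniq On (card_short_orbit Cu)).
  by rewrite (short_orbit_odd Cu).
move=> [u nCu <-]; split; first by exists u.
by exists (2 * q)%N; split; [rewrite mul2n odd_double | exact: card_long_orbit].
Qed.

Lemma card_orbit_dichotomy u :
  (orbit_of b u #= `I_q /\ odd q) \/ orbit_of b u #= `I_(2 * q).
Proof.
have [Cu|nCu] := pselect (C u (b u)); last by right; exact: card_long_orbit.
by left; split; [exact: card_short_orbit | exact: short_orbit_odd Cu].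
Qed.

Lemma short_orbit_exists_iff :
  (exists u, C u (b u)) <-> odd q /\ exists g, w *+ q = alpha g - g.
Proof.
split=> [[u Cu]|[q_odd [g wq]]].
  by split; [exact: short_orbit_odd Cu | exact: short_orbit_cond Cu].
by eexists; exact: short_orbit_witness q_odd wq.
Qed.

Lemma odd_orbit_exists_iff :
  (exists u n, odd n /\ orbit_of b u #= `I_n) <->
  odd q /\ exists g, w *+ q = alpha g - g.
Proof.
split=> [[u [n [n_odd On]]]|/short_orbit_exists_iff[u Cu]].
  apply/short_orbit_exists_iff; have : odd_orbits b (orbit_of b u).
    by split; [exists u | exists n].
  by rewrite odd_orbitsE => -[v Cv _]; exists v.
by exists u, q; split; [exact: short_orbit_odd Cu | exact: card_short_orbit].
Qed.

Lemma odd_orbit_cond_of_range :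
  range (fun x => alpha x - x) = [set x | alpha x + x = 0] ->
  exists g, w *+ q = alpha g - g.
Proof.
have [_ tq0] := cyclic_subgroup_order card_Q.
move=> range_delta; have : [set x | alpha x + x = 0] (w *+ q).
  by rewrite /= raddfMn /= -mulrnDl.
by rewrite -range_delta => -[g _ <-]; exists g.
Qed.

Lemma short_orbitsE u0 : odd q -> C u0 (b u0) ->
  [set u | C u (b u)] = [set v | alpha (v - u0) - (v - u0) = 0].
Proof. by move=> q_odd Cu0; apply/seteqP; split=> v /(short_orbit_shift v q_odd Cu0). Qed.

Lemma card_odd_orbits u0 c : odd q -> C u0 (b u0) ->
  card_is [set x | alpha x - x = 0] c -> card_is (odd_orbits b) (ediv c q).
Proof.
move=> q_odd Cu0 card_ker; have [q_gt0 _] := cyclic_subgroup_order card_Q.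
rewrite odd_orbitsE; apply: card_is_orbits => //.
- by move=> u v Cu uv; exact: short_orbit_orbit uv Cu.
- by move=> u; exact: card_short_orbit.
- rewrite (short_orbitsE q_odd Cu0).
  exact: card_is_card_eq (card_translate _ _) card_ker.
Qed.

Lemma card_even_orbits_short u0 c : odd q -> C u0 (b u0) ->
  card_is (~` [set x | alpha x - x = 0]) c ->
  card_is (even_orbits b) (ediv c (2 * q)).
Proof.
move=> q_odd Cu0 card_ker; have [q_gt0 _] := cyclic_subgroup_order card_Q.
rewrite even_orbitsE; apply: card_is_orbits; first by rewrite muln_gt0.
- by move=> u v nCu uv Cv; apply/nCu/(short_orbit_orbit _ Cv)/orbit_ofC.
- by move=> u; exact: card_long_orbit.
- rewrite -[[set u | ~ _]]/(~` [set u | C u (b u)]) (short_orbitsE q_odd Cu0).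
  exact: card_is_card_eq (card_translate _ _) card_ker.
Qed.

Lemma card_orbits_no_short : ~ (exists u, C u (b u)) ->
  card_is (odd_orbits b) (Fin 0) /\
  forall c, card_is [set: G] c -> card_is (even_orbits b) (ediv c (2 * q)).
Proof.
move=> no_short; have [q_gt0 _] := cyclic_subgroup_order card_Q.
split.
  rewrite odd_orbitsE /= II0 card_eq0; apply/eqP/seteqP; split=> // O [u Cu _].
  by apply: no_short; exists u.
move=> c; rewrite even_orbitsE (_ : [set u | ~ C u (b u)] = [set: G]); last first.
  by apply/seteqP; split=> // u _ Cu; apply: no_short; exists u.
apply: card_is_orbits => //; first by rewrite muln_gt0.
by move=> u _; apply: card_long_orbit => Cu; apply: no_short; exists u.
Qed.

End FiniteCyclicSubgroup.

End AffineInvolution.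

Theorem theorem3p1 (G : zmodType) (w : G) (alpha : G -> G)
  (alpha_add : forall x y, alpha (x + y) = alpha x + alpha y)
  (alpha_inv : forall x, alpha (alpha x) = x) :
  let b := beta alpha w in
  let Q := cyclic_subgroup (alpha w + w) in
  let star := fun q : nat =>
    odd q /\ exists g : G, w *+ q = alpha g - g in
  let ker_m := [set x : G | alpha x - x = 0] in
  (card_is Q Inf -> forall u : G, card_is (orbit_of b u) Inf) /\
  (forall q : nat, card_is Q (Fin q) ->
     (forall u : G,
        (card_is (orbit_of b u) (Fin q) /\ odd q) \/
        card_is (orbit_of b u) (Fin (2 * q)%N)) /\
     ((exists u : G, exists n : nat, odd n /\ card_is (orbit_of b u) (Fin n))
        <-> star q) /\
     (odd q -> range (fun x : G => alpha x - x) = [set x | alpha x + x = 0] -> star q) /\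
     (star q ->
        (forall c, card_is ker_m c -> card_is (odd_orbits b) (ediv c q)) /\
        (forall c, card_is (~` ker_m) c ->
                   card_is (even_orbits b) (ediv c (2 * q)%N))) /\
     (~ star q ->
        card_is (odd_orbits b) (Fin 0) /\
        (forall c, card_is [set: G] c ->
                   card_is (even_orbits b) (ediv c (2 * q)%N)))).
Proof.
move=> b Q star ker_m; split=> [infQ u|q card_Q]; first exact: card_orbit_infinite.
have short_iff := short_orbit_exists_iff alpha_add alpha_inv card_Q.
split; first exact: card_orbit_dichotomy.
split; first exact: odd_orbit_exists_iff.
split; first by move=> q_odd /(odd_orbit_cond_of_range alpha_add card_Q).
split.
  move=> /short_iff[u0 Cu0]; have q_odd := short_orbit_odd alpha_add alpha_inv card_Q Cu0.
  split=> c; first exact: (card_odd_orbits alpha_add alpha_inv card_Q q_odd Cu0).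
  exact: (card_even_orbits_short alpha_add alpha_inv card_Q q_odd Cu0).
move=> no_star; apply: (card_orbits_no_short alpha_add alpha_inv card_Q).
by move=> /short_iff.
Qed.
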